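(* There is an absolute constant $c>0$ such that for all $M,T\ge1$ there exist a bid grid $\mathcal B$, a valuation vector $\bm v$, and a distribution over sequences of competing bid vectors $(\bm b^t_-)_{t\in[T]}$ such that every (possibly randomized) bidding algorithm in the full information setting has expected discretized regret $\textsc{Regret}_{\mathcal B}\ge cM\sqrt T$; that is, $\textsc{Regret}_{\mathcal B}\in\Omega(M\sqrt T)$ under full information. Consequently the same lower bound holds in the bandit feedback setting.
   Context: Setting: an agent demands up to $M$ units in each of $T$ rounds of a multi-unit pay-as-bid auction, with valuation $\bm v\in[0,1]^M$, $v_1\ge\dots\ge v_M$, and bids in a finite grid $\mathcal B\subset[0,1]$; $\mathcal B^{+M}$ denotes non-increasing $M$-vectors with entries in $\mathcal B$. In round $t$ the competing bids are $\bm b^t_-=(b^t_{-1}\le\dots\le b^t_{-\overline M})$, $\overline M\ge M$, and bidding $\bm b$ yields $\mu^t(\bm b)=\sum_m(v_m-b_m)\mathbf 1_{b_m\ge b^t_{-m}}$. Full information: the agent observes $\bm b^t_-$ after round $t$; bandit: it only observes its allocation. $\textsc{Regret}_{\mathcal B}=\max_{\bm b\in\mathcal B^{+M},b_m\le v_m}\sum_t\mu^t(\bm b)-\mathbb E[\sum_t\mu^t(\bm b^t)]$, where $\bm b^t$ is the algorithm's bid in round $t$; the expectation is also over the random competing bids. *)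

From HB Require Import structures.
From mathcomp Require Import all_boot all_order all_algebra.
From mathcomp Require Import reals.
From Stdlib Require List.
Set Implicit Arguments. Unset Strict Implicit. Unset Printing Implicit Defensive.
Import Order.TTheory GRing.Theory Num.Theory.
Local Open Scope ring_scope.

Section Auction.
Variable R : realType.

(* Vectors (bids, valuations, competing bids) are sequences of reals,
   indexed from 0: entry m (0-based) is the (m+1)-th coordinate. *)

Definition in01 (x : R) : bool := (0 <= x) && (x <= 1).

Definition grid_ok (B : seq R) : bool := all in01 B.

Definition bidvec (B : seq R) (M : nat) (b : seq R) : bool :=
  [&& size b == M, all (fun x => x \in B) b & sorted >=%R b].

Definition valuation_ok (M : nat) (v : seq R) : bool :=
  [&& size v == M, all in01 v & sorted >=%R v].

Definition compvec (Mbar : nat) (c : seq R) : bool :=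
  [&& size c == Mbar, all in01 c & sorted <=%R c].

Definition util (M : nat) (v b c : seq R) : R :=
  \sum_(m < M) (nth 0 v m - nth 0 b m) * (if nth 0 c m <= nth 0 b m then 1 else 0).

Definition alloc (M : nat) (b c : seq R) : seq R :=
  [seq (if nth 0 c m <= nth 0 b m then 1 else 0) | m <- iota 0 M].

Fixpoint tuples_of (B : seq R) (n : nat) : seq (seq R) :=
  if n is n'.+1 then [seq x :: s | x <- B, s <- tuples_of B n'] else [:: [::]].

Definition comparator (B : seq R) (M : nat) (v b : seq R) : bool :=
  bidvec B M b && all (fun m => nth 0 b m <= nth 0 v m) (iota 0 M).

Definition comparators (B : seq R) (M : nat) (v : seq R) : seq (seq R) :=
  [seq b <- tuples_of B M | comparator B M v b].

(* A sequence of competing bid vectors: round t (0-based, t < T) uses s t. *)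
Definition bidseq := nat -> seq R.

(* best fixed comparator in hindsight: max_b sum_{t<T} mu^t(b)
   (the comparator class will be required nonempty, and every comparator has
   nonnegative utility, so the default 0 is harmless). *)
Definition opt (B : seq R) (M T : nat) (v : seq R) (s : bidseq) : R :=
  \big[Num.max/0]_(b <- comparators B M v) \sum_(t < T) util M v b (s t).

(* A (possibly randomized) bidding algorithm, in behavioral form: in round t,
   given the history of (own bid, feedback) pairs of the previous rounds, it
   outputs a finitely supported distribution over bids, as a list of
   (probability, bid) pairs. *)
Definition history := seq (seq R * seq R).
Definition policy := nat -> history -> seq (R * seq R).

Definition policy_ok (B : seq R) (M : nat) (pol : policy) : Prop :=
  forall t h, [/\ all (fun pb => 0 <= pb.1) (pol t h),
                  \sum_(pb <- pol t h) pb.1 = 1 &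
                  all (fun pb => bidvec B M pb.2) (pol t h)].

Definition feedback := seq R -> seq R -> seq R.
Definition full_info : feedback := fun b c => c.
Definition bandit (M : nat) : feedback := fun b c => alloc M b c.

(* expected total utility of the algorithm over rounds t, t+1, ..., t+n-1,
   given the realised competing bids s and the history h so far *)
Fixpoint alg_value (M : nat) (v : seq R) (pol : policy) (fb : feedback)
    (s : bidseq) (t n : nat) (h : history) : R :=
  if n is n'.+1 then
    \sum_(pb <- pol t h)
       pb.1 * (util M v pb.2 (s t)
               + alg_value M v pol fb s t.+1 n' (rcons h (pb.2, fb pb.2 (s t))))
  else 0.

(* A finitely supported distribution over sequences of competing bid vectors:
   list of (probability, sequence) pairs. *)
Definition dist_ok (Mbar T : nat) (D : seq (R * bidseq)) : Prop :=
  [/\ all (fun d => 0 <= d.1) D,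
      \sum_(d <- D) d.1 = 1 &
      forall d, Stdlib.Lists.List.In d D -> forall t, (t < T)%N -> compvec Mbar (d.2 t)].

Definition regret (B : seq R) (M T : nat) (v : seq R) (D : seq (R * bidseq))
    (pol : policy) (fb : feedback) : R :=
  \sum_(d <- D) d.1 * (opt B M T v d.2 - alg_value M v pol fb d.2 0 T [::]).

End Auction.

(* Let the M competing bids of every round all equal 0 or all equal 1/2, by
   independent fair coin flips, and value every unit at 1.  On the grid
   {0, 1/2} each unit bid earns 1 in total over the two prices, so whatever
   the algorithm has observed, its expected utility is M/2 per round.  In
   hindsight, bidding 0 everywhere earns M/2 (T + W) and bidding 1/2 earns
   M T / 2, where W is the final position of the +-1 random walk of the
   coins; hence the regret is at least (M/2) E[max(W, 0)] = (M/4) E|W|.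
   Comparing the second and fourth moments of W (Khintchine's inequality)
   gives E|W| >= sqrt T / 8.  The argument never uses the feedback, so it
   applies to bandit feedback as well. *)
From mathcomp Require Import all_boot all_order all_algebra.
From mathcomp Require Import reals.
From mathcomp Require Import lra ring.

Set Implicit Arguments.
Unset Strict Implicit.
Unset Printing Implicit Defensive.

Import Order.TTheory GRing.Theory Num.Theory.
Local Open Scope ring_scope.

Fixpoint bitseqs (n : nat) : seq bitseq :=
  if n is n'.+1 then map (cons true) (bitseqs n') ++ map (cons false) (bitseqs n')
  else [:: [::]].

Lemma size_bitseqs n : size (bitseqs n) = (2 ^ n)%N.
Proof. by elim: n => [|n IHn] //=; rewrite size_cat !size_map IHn expnS mul2n addnn. Qed.

Lemma size_mem_bitseqs n l : l \in bitseqs n -> size l = n.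
Proof.
elim: n l => [|n IHn] l /=; first by rewrite inE => /eqP ->.
by rewrite mem_cat => /orP [] /mapP [l' /IHn <- ->].
Qed.

Section RandomWalk.
Variable R : realType.

Lemma big_bitseqsS n (F : bitseq -> R) :
  \sum_(l <- bitseqs n.+1) F l = \sum_(l <- bitseqs n) (F (true :: l) + F (false :: l)).
Proof. by rewrite /= big_cat !big_map big_split. Qed.

Lemma sum_bitseqs_const n (c : R) : \sum_(l <- bitseqs n) c = c * (2 ^ n)%:R.
Proof. by rewrite big_const_seq count_predT iter_addr_0 size_bitseqs mulr_natr. Qed.

Definition coin_sign (b : bool) : R := if b then 1 else -1.

Definition walk (l : bitseq) : R := \sum_(b <- l) coin_sign b.

Lemma walk_cons b l : walk (b :: l) = coin_sign b + walk l.
Proof. by rewrite /walk big_cons. Qed.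

Lemma walk_nth l : walk l = \sum_(t < size l) coin_sign (nth false l t).
Proof. by rewrite /walk (big_nth false) big_mkord. Qed.

Lemma sum_walk n : \sum_(l <- bitseqs n) walk l = 0.
Proof.
elim: n => [|n IHn]; first by rewrite big_seq1 /walk big_nil.
rewrite big_bitseqsS (eq_bigr (fun l => 2 * walk l)) -?mulr_sumr ?IHn ?mulr0 // => l _.
by rewrite !walk_cons /=; ring.
Qed.

Lemma sum_walk_sqr n : \sum_(l <- bitseqs n) walk l ^+ 2 = n%:R * (2 ^ n)%:R.
Proof.
elim: n => [|n IHn]; first by rewrite big_seq1 /walk big_nil; ring.
rewrite big_bitseqsS (eq_bigr (fun l => 2 * walk l ^+ 2 + 2)); last first.
  by move=> l _; rewrite !walk_cons /=; ring.
rewrite big_split /= -mulr_sumr IHn sum_bitseqs_const expnS natrM -natr1; ring.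
Qed.

Lemma sum_walk_exp4 n :
  \sum_(l <- bitseqs n) walk l ^+ 4 = (3 * n%:R ^+ 2 - 2 * n%:R) * (2 ^ n)%:R.
Proof.
elim: n => [|n IHn]; first by rewrite big_seq1 /walk big_nil; ring.
rewrite big_bitseqsS (eq_bigr (fun l => 2 * walk l ^+ 4 + 12 * walk l ^+ 2 + 2)).
  rewrite !big_split /= -!mulr_sumr IHn sum_walk_sqr sum_bitseqs_const.
  by rewrite expnS natrM -natr1; ring.
by move=> l _; rewrite !walk_cons /=; ring.
Qed.

Lemma sqr_mul_le_cube_abs_add_exp4 (a z : R) : 0 <= a ->
  a ^+ 2 * z ^+ 2 <= a ^+ 3 * `|z| + z ^+ 4.
Proof.
move=> a_ge0; have z2 : z ^+ 2 = `|z| ^+ 2 by rewrite real_normK ?num_real.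
rewrite -[z ^+ 4]/(z ^+ (2 * 2)) exprM z2 -subr_ge0.
case: (lerP `|z| a) => [w_le_a | a_lt_w].
- have -> : a ^+ 3 * `|z| + `|z| ^+ 2 ^+ 2 - a ^+ 2 * `|z| ^+ 2 =
            a ^+ 2 * `|z| * (a - `|z|) + `|z| ^+ 2 ^+ 2 by ring.
  by rewrite addr_ge0 ?mulr_ge0 ?exprn_ge0 ?subr_ge0.
- have -> : a ^+ 3 * `|z| + `|z| ^+ 2 ^+ 2 - a ^+ 2 * `|z| ^+ 2 =
            `|z| ^+ 2 * ((`|z| - a) * (`|z| + a)) + a ^+ 3 * `|z| by ring.
  by rewrite addr_ge0 ?mulr_ge0 ?exprn_ge0 ?subr_ge0 ?(ltW a_lt_w) ?addr_ge0.
Qed.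

(* The choice a = 2 sqrt n in the pointwise inequality above balances the
   second moment n 2^n against the fourth moment, which is at most 3 n^2 2^n. *)
Lemma sum_abs_walk_ge n : (0 < n)%N ->
  Num.sqrt n%:R * (2 ^ n)%:R <= 8 * \sum_(l <- bitseqs n) `|walk l|.
Proof.
move=> n_gt0; set s := Num.sqrt n%:R; set S := \sum_(l <- _) _.
have s_gt0 : 0 < s by rewrite sqrtr_gt0 ltr0n.
have s2 : s ^+ 2 = n%:R by rewrite sqr_sqrtr.
have P_gt0 : (0 : R) < (2 ^ n)%:R by rewrite ltr0n expn_gt0.
have : \sum_(l <- bitseqs n) (2 * s) ^+ 2 * walk l ^+ 2 <=
       \sum_(l <- bitseqs n) ((2 * s) ^+ 3 * `|walk l| + walk l ^+ 4).
  by apply: ler_sum => l _; apply: sqr_mul_le_cube_abs_add_exp4; rewrite mulr_ge0 ?ltW.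
rewrite big_split /= -!mulr_sumr sum_walk_sqr sum_walk_exp4 -/S -s2 => moments.
have : 0 <= s ^+ 2 * (2 ^ n)%:R by rewrite mulr_ge0 ?sqr_ge0 ?ltW.
rewrite -(ler_pM2l (exprn_gt0 3 s_gt0)); lra.
Qed.

End RandomWalk.

Lemma sorted_nseq (T : Type) (r : rel T) x n : r x x -> sorted r (nseq n x).
Proof. by move=> rxx; case: n => //= n; elim: n => //= n ->; rewrite rxx. Qed.

Section Auction.
Variable R : realType.

Lemma mem_tuples_of (B b : seq R) : all (mem B) b -> b \in tuples_of B (size b).
Proof.
elim: b => [|x b IHb] /=; first by rewrite inE.
by case/andP => xB /IHb bB; apply: (allpairs_f (fun x s => x :: s) xB bB).
Qed.

Lemma eq_alg_value M (v : seq R) pol fb n t h (s s' : bidseq R) :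
  (forall u, (t <= u)%N -> s u = s' u) ->
  alg_value M v pol fb s t n h = alg_value M v pol fb s' t n h.
Proof.
elim: n t h => [|n IHn] t h eq_s //=.
apply: eq_bigr => pb _; rewrite eq_s // (IHn t.+1) // => u /ltnW; exact: eq_s.
Qed.

End Auction.

Section CoinAuction.
Variables (R : realType) (M : nat).

Definition coin_grid : seq R := [:: 0; 1/2].

Definition coin_price (b : bool) : R := if b then 0 else 1/2.

(* Round u reads coin u - t, so that dropping the first coin amounts to
   starting one round later. *)
Definition coin_bids (t : nat) (l : bitseq) : bidseq R :=
  fun u => nseq M (coin_price (nth false l (u - t))).

Definition coin_dist (T : nat) : seq (R * bidseq R) :=
  [seq ((2 ^ T)%:R^-1, coin_bids 0 l) | l <- bitseqs T].

Let half_le0 : (1/2 <= (0 : R)) = false.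
Proof. by apply/negbTE; rewrite -ltNge; lra. Qed.

Let half_ge0 : (0 : R) <= 1/2.
Proof. by lra. Qed.

Lemma coin_grid_in01 x : x \in coin_grid -> in01 x.
Proof. by rewrite !inE /in01 => /orP [] /eqP ->; apply/andP; split; lra. Qed.

Lemma coin_price_in_grid b : coin_price b \in coin_grid.
Proof. by case: b; rewrite !inE eqxx ?orbT. Qed.

Lemma util_nseq (a x : R) :
  util M (nseq M 1) (nseq M a) (nseq M x) = M%:R * ((1 - a) * (if x <= a then 1 else 0)).
Proof.
rewrite /util (eq_bigr (fun=> (1 - a) * (if x <= a then 1 else 0))); last first.
  by move=> m _; rewrite !nth_nseq ltn_ord.
by rewrite sumr_const card_ord mulr_natl.
Qed.

Lemma util_zero_bid b :
  util M (nseq M 1) (nseq M 0) (nseq M (coin_price b)) = M%:R / 2 * (coin_sign R b + 1).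
Proof.
rewrite util_nseq; case: b => /=; rewrite ?lexx; first by field.
by rewrite half_le0 addNr !mulr0.
Qed.

Lemma util_half_bid b :
  util M (nseq M 1) (nseq M (1/2)) (nseq M (coin_price b)) = M%:R / 2.
Proof.
by rewrite util_nseq; case: b => /=; rewrite ?lexx ?half_ge0; field.
Qed.

Lemma util_coin_prices b : bidvec coin_grid M b ->
  util M (nseq M 1) b (nseq M (coin_price true))
    + util M (nseq M 1) b (nseq M (coin_price false)) = M%:R.
Proof.
case/and3P => /eqP size_b /allP b_grid _; rewrite /util -big_split /=.
have -> : M%:R = \sum_(m < M) 1 :> R by rewrite sumr_const card_ord.
apply: eq_bigr => m _; rewrite !nth_nseq ltn_ord.
have : nth 0 b m \in coin_grid by apply: b_grid; rewrite mem_nth // size_b.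
rewrite !inE => /orP [] /eqP ->.
- by rewrite half_le0 lexx subr0 mulr1 mulr0 addr0.
- by rewrite half_ge0 lexx; field.
Qed.

Lemma alg_value_coin_bids_cons pol fb n t h b l :
  alg_value M (nseq M 1) pol fb (coin_bids t (b :: l)) t n.+1 h =
  \sum_(pb <- pol t h) pb.1 * (util M (nseq M 1) pb.2 (nseq M (coin_price b)) +
     alg_value M (nseq M 1) pol fb (coin_bids t.+1 l) t.+1 n
        (rcons h (pb.2, fb pb.2 (nseq M (coin_price b))))).
Proof.
have first_round : coin_bids t (b :: l) t = nseq M (coin_price b) by rewrite /coin_bids subnn.
rewrite /= first_round; apply: eq_bigr => pb _; congr (_ * (_ + _)).
by apply: eq_alg_value => u t_lt_u; rewrite /coin_bids -(subnSK t_lt_u).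
Qed.

Lemma sum_alg_value_coin_bids pol fb : policy_ok coin_grid M pol -> forall n t h,
  \sum_(l <- bitseqs n) alg_value M (nseq M 1) pol fb (coin_bids t l) t n h
    = (2 ^ n)%:R * (n%:R * M%:R / 2).
Proof.
move=> pol_ok; elim=> [|n IHn] t h; first by rewrite big_seq1 !mul0r mulr0.
rewrite big_bitseqsS.
under eq_bigr => l _ do rewrite !alg_value_coin_bids_cons -big_split /=.
rewrite exchange_big /=; case: (pol_ok t h) => _ sum_p1 /allP pol_grid.
set avg := (2 ^ n.+1)%:R * _.
transitivity (\sum_(pb <- pol t h) pb.1 * avg); last by rewrite -mulr_suml sum_p1 mul1r.
rewrite big_seq [RHS]big_seq; apply: eq_bigr => pb /pol_grid pb_ok.
under eq_bigr => l _ do rewrite -mulrDr.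
rewrite -mulr_sumr; congr (_ * _).
rewrite !big_split /= !IHn !sum_bitseqs_const /avg expnS natrM -natr1.
have -> : util M (nseq M 1) pb.2 (nseq M (coin_price false)) =
          M%:R - util M (nseq M 1) pb.2 (nseq M (coin_price true)).
  by rewrite -(util_coin_prices pb_ok) addrC addKr.
by field.
Qed.

Lemma nseq_comparator a : a \in coin_grid ->
  nseq M a \in comparators coin_grid M (nseq M 1).
Proof.
move=> a_grid; have /andP [_ a_le1] := coin_grid_in01 a_grid.
have nseq_grid : all (mem coin_grid) (nseq M a) by rewrite all_nseq; apply/orP; right.
rewrite mem_filter /comparator /bidvec size_nseq eqxx nseq_grid sorted_nseq //=.
apply/andP; split.
  by apply/allP => m; rewrite mem_iota => /andP [_ m_lt_M]; rewrite !nth_nseq m_lt_M.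
by rewrite -{2}(size_nseq M a) mem_tuples_of.
Qed.

Lemma opt_coin_bids_ge l :
  M%:R * (size l)%:R / 2 + M%:R * (walk R l + `|walk R l|) / 4
    <= opt coin_grid M (size l) (nseq M 1) (coin_bids 0 l).
Proof.
set gain := fun b => \sum_(t < size l) util M (nseq M 1) b (coin_bids 0 l t).
have gain_le_opt a : a \in coin_grid ->
    gain (nseq M a) <= opt coin_grid M (size l) (nseq M 1) (coin_bids 0 l).
  by move=> a_grid; rewrite /opt; apply: le_bigmax_seq => //; apply: nseq_comparator.
have size_l : (size l)%:R = \sum_(t < size l) 1 :> R by rewrite sumr_const card_ord.
have gain0 : gain (nseq M 0) = M%:R / 2 * (walk R l + (size l)%:R).
  rewrite /gain walk_nth size_l -big_split mulr_sumr /=.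
  by apply: eq_bigr => t _; rewrite /coin_bids subn0 util_zero_bid.
have gain_half : gain (nseq M (1/2)) = M%:R / 2 * (size l)%:R.
  rewrite /gain size_l mulr_sumr.
  by apply: eq_bigr => t _; rewrite /coin_bids util_half_bid mulr1.
have := gain_le_opt 0 (coin_price_in_grid true).
have := gain_le_opt (1/2) (coin_price_in_grid false).
rewrite gain0 gain_half; case: (lerP 0 (walk R l)) => [walk_ge0 | walk_lt0].
- by rewrite ger0_norm //; lra.
- by rewrite ltr0_norm //; lra.
Qed.

Lemma coin_dist_ok T : dist_ok M T (coin_dist T).
Proof.
have two_pow_gt0 : (0 : R) < (2 ^ T)%:R by rewrite ltr0n expn_gt0.
split.
- by rewrite all_map; apply/allP => l _ /=; rewrite invr_ge0 ltW.
- by rewrite big_map sum_bitseqs_const mulVf // lt0r_neq0.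
- move=> d; rewrite /coin_dist; elim: (bitseqs T) => //= l ls IHls [<- u _ | /IHls //].
  rewrite /compvec size_nseq eqxx all_nseq coin_grid_in01 ?coin_price_in_grid ?orbT //=.
  exact: sorted_nseq.
Qed.

Lemma regret_coin_dist_ge T pol fb : (0 < T)%N -> policy_ok coin_grid M pol ->
  1/32 * M%:R * Num.sqrt T%:R <= regret coin_grid M T (nseq M 1) (coin_dist T) pol fb.
Proof.
move=> T_gt0 pol_ok; set P := ((2 ^ T)%:R : R).
have P_gt0 : 0 < P by rewrite ltr0n expn_gt0.
rewrite /regret big_map /= -mulr_sumr sumrB sum_alg_value_coin_bids //.
set S := \sum_(l <- bitseqs T) `|walk R l|.
have opt_ge : P * (M%:R * T%:R / 2) + M%:R * S / 4 <=
              \sum_(l <- bitseqs T) opt coin_grid M T (nseq M 1) (coin_bids 0 l).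
  apply: le_trans (_ : \sum_(l <- bitseqs T)
    (M%:R * T%:R / 2 + M%:R * (walk R l + `|walk R l|) / 4) <= _); last first.
    rewrite big_seq [X in _ <= X]big_seq; apply: ler_sum => l /size_mem_bitseqs <-.
    exact: opt_coin_bids_ge.
  rewrite big_split /= sum_bitseqs_const -mulr_suml -mulr_sumr big_split /= sum_walk.
  by rewrite add0r mulrC.
have walk_ge : M%:R * (Num.sqrt T%:R * P) <= M%:R * (8 * S).
  by rewrite ler_wpM2l // sum_abs_walk_ge.
rewrite -[X in X <= _](mulKf (lt0r_neq0 P_gt0)) -/P.
apply: ler_wpM2l; first by rewrite invr_ge0 ltW.
lra.
Qed.
End CoinAuction.

Theorem theorem7 (R : realType) :
  exists c : R, 0 < c /\
  forall M T : nat, (1 <= M)%N -> (1 <= T)%N ->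
  exists (Mbar : nat) (B : seq R) (v : seq R) (D : seq (R * bidseq R)),
    [/\ (M <= Mbar)%N, grid_ok B, valuation_ok M v,
        comparators B M v != [::] & dist_ok Mbar T D] /\
    ((forall pol : policy R, policy_ok B M pol ->
           c * M%:R * Num.sqrt T%:R <= regret B M T v D pol (@full_info R))
     /\ (forall pol : policy R, policy_ok B M pol ->
           c * M%:R * Num.sqrt T%:R <= regret B M T v D pol (@bandit R M))).
Proof.
exists (1/32); split; first lra.
move=> M T _ T_gt0; exists M, (coin_grid R), (nseq M 1), (coin_dist R M T).
split; last by split=> pol pol_ok; apply: regret_coin_dist_ge.
split => //.
- exact/allP/coin_grid_in01.
- rewrite /valuation_ok size_nseq eqxx all_nseq /in01 lexx ler01 orbT sorted_nseq //; exact: lexx.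
- by apply: contraTneq (nseq_comparator M (coin_price_in_grid R true)) => ->.
- exact: coin_dist_ok.
Qed.
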